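(* For every triangle $T$ (a set of three non-collinear points in some $\mathbb{R}^k$) there is $p_0(T)$ such that $T$ is Euclidean sub-$p$-toral for every prime $p\ge p_0(T)$.
   Context: A $p$-torus is a group isomorphic to $(\mathbb{Z}_p)^\alpha$ for some $\alpha\ge1$. A set $X\subset\mathbb{R}^k$ is Euclidean sub-$p$-toral if there exist $n\ge k$, a $p$-torus $G$ and an action of $G$ on $\mathbb{R}^n$ by isometries such that $X$ (viewed in $\mathbb{R}^n$ via the standard inclusion $\mathbb{R}^k\subset\mathbb{R}^n$) is contained in a single $G$-orbit. *)

From HB Require Import structures.
From mathcomp Require Import all_boot all_order all_algebra.
From mathcomp Require Import reals.
Set Implicit Arguments. Unset Strict Implicit. Unset Printing Implicit Defensive.
Import Order.TTheory GRing.Theory Num.Theory.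
Local Open Scope ring_scope.

Definition sqdist (R : realType) (m : nat) (x y : 'rV[R]_m) : R :=
  \sum_(i < m) (x 0 i - y 0 i) ^+ 2.

Definition std_incl (R : realType) (k n : nat) (x : 'rV[R]_k) : 'rV[R]_n :=
  \row_(i < n) (if @insub nat (fun j => j < k)%N _ (nat_of_ord i) is Some j
                then x 0 j else 0).

(* the p-torus (Z_p)^alpha, realised as the additive group 'rV['F_p]_alpha,
   acts on R^n by isometries via [act] *)
Definition isometric_action (p alpha n : nat) (R : realType)
    (act : 'rV['F_p]_alpha -> 'rV[R]_n -> 'rV[R]_n) : Prop :=
  [/\ forall x, act 0 x = x,
      forall g h x, act (g + h) x = act g (act h x)
    & forall g x y, sqdist (act g x) (act g y) = sqdist x y].

Definition euclidean_sub_p_toral (p : nat) (R : realType) (k : nat)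
    (X : 'rV[R]_k -> Prop) : Prop :=
  exists n : nat, (k <= n)%N /\
  exists alpha : nat, (1 <= alpha)%N /\
  exists act : 'rV['F_p]_alpha -> 'rV[R]_n -> 'rV[R]_n,
    isometric_action act /\
    exists x0 : 'rV[R]_n,
      forall x, X x -> exists g, std_incl n x = act g x0.

Definition non_collinear (R : realType) (k : nat) (a b c : 'rV[R]_k) : Prop :=
  \rank (col_mx (b - a) (c - a)) = 2%N.

From HB Require Import structures.
From mathcomp Require Import all_boot all_order all_algebra.
From mathcomp Require Import reals trigo.
From mathcomp Require Import ring lra.
Set Implicit Arguments. Unset Strict Implicit. Unset Printing Implicit Defensive.
Import Order.TTheory GRing.Theory Num.Theory.
Local Open Scope ring_scope.

(* A triangle is determined up to isometry by its squared side lengths (x, y, z), and any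
   two congruent triangles are exchanged by at most three reflections, which conjugate
   isometric actions into isometric actions.  So it suffices to find three points in one
   orbit of (Z_p)^4 acting on R^(8+k) by rotations of four planes through multiples of
   2pi/p.  A point at radius r in a plane where two group elements turn by a and b steps
   contributes r^2 (C_a, C_b, C_(b-a)) to the squared distances, with C_n = 4 sin^2(n pi/p),
   and the planes add up.  Three planes give every triple obeying the triangle inequalities.
   A fourth, turned by s and -t steps, contributes (C_s, C_t, C_(s+t)), whose excess
   C_(s+t) - C_s - C_t = 8 sin(s pi/p) sin(t pi/p) cos((s+t) pi/p) makes it "obtuse"; when
   z > x + y, choosing s/t between the bounds imposed by the strict triangle inequality of
   the side lengths and p large enough lets a multiple of it absorb the excess z - x - y. *)

(** * Inner product and reflections *)

Section InnerProduct.
Variable R : realType.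

Definition dotp (m : nat) (u v : 'rV[R]_m) : R := (u *m v^T) 0 0.

Lemma dotpE m (u v : 'rV[R]_m) : dotp u v = \sum_(i < m) u 0 i * v 0 i.
Proof. by rewrite /dotp mxE; apply: eq_bigr => i _; rewrite mxE. Qed.

Lemma dotpC m (u v : 'rV[R]_m) : dotp u v = dotp v u.
Proof. by rewrite !dotpE; apply: eq_bigr => i _; rewrite mulrC. Qed.

Lemma dotpDl m (u v w : 'rV[R]_m) : dotp (u + v) w = dotp u w + dotp v w.
Proof. by rewrite /dotp mulmxDl mxE. Qed.

Lemma dotpZl m a (u w : 'rV[R]_m) : dotp (a *: u) w = a * dotp u w.
Proof. by rewrite /dotp -scalemxAl mxE. Qed.

Lemma dotpBl m (u v w : 'rV[R]_m) : dotp (u - v) w = dotp u w - dotp v w.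
Proof. by rewrite dotpDl -scaleN1r dotpZl mulN1r. Qed.

Lemma dotpMn m n (u w : 'rV[R]_m) : dotp (u *+ n) w = dotp u w *+ n.
Proof. by rewrite -scaler_nat dotpZl mulr_natl. Qed.

Lemma dotpBr m (u v w : 'rV[R]_m) : dotp w (u - v) = dotp w u - dotp w v.
Proof. by rewrite dotpC dotpBl !(dotpC w). Qed.

Lemma dotpZr m a (u w : 'rV[R]_m) : dotp w (a *: u) = a * dotp w u.
Proof. by rewrite dotpC dotpZl dotpC. Qed.

Lemma dotp_ge0 m (u : 'rV[R]_m) : 0 <= dotp u u.
Proof. by rewrite dotpE sumr_ge0 // => i _; rewrite -expr2 sqr_ge0. Qed.

Lemma dotp_eq0 m (u : 'rV[R]_m) : (dotp u u == 0) = (u == 0).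
Proof.
apply/idP/eqP => [|->]; last by rewrite /dotp mul0mx mxE.
rewrite dotpE psumr_eq0 => [/allP u0|i _]; last by rewrite -expr2 sqr_ge0.
apply/rowP => i; have := u0 i (mem_index_enum _).
by rewrite mxE -expr2 sqrf_eq0 => /eqP.
Qed.

Lemma sqdistE m (x y : 'rV[R]_m) : sqdist x y = dotp (x - y) (x - y).
Proof. by rewrite dotpE; apply: eq_bigr => i _; rewrite !mxE expr2. Qed.

Lemma sqdistC m (x y : 'rV[R]_m) : sqdist x y = sqdist y x.
Proof. by rewrite !sqdistE -opprB -scaleN1r dotpZl dotpZr mulrA mulrNN !mul1r. Qed.

Lemma sqdistxx m (x : 'rV[R]_m) : sqdist x x = 0.
Proof. by apply/eqP; rewrite sqdistE subrr dotp_eq0. Qed.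

Lemma sqdist_ge0 m (x y : 'rV[R]_m) : 0 <= sqdist x y.
Proof. by rewrite sqdistE dotp_ge0. Qed.

Lemma sqdist_row m1 m2 (x y : 'rV[R]_m1) (x' y' : 'rV[R]_m2) :
  sqdist (row_mx x x') (row_mx y y') = sqdist x y + sqdist x' y'.
Proof.
by rewrite !sqdistE opp_row_mx add_row_mx /dotp tr_row_mx mul_row_col mxE.
Qed.

End InnerProduct.

Section BisectorReflection.
Variables (R : realType) (m : nat).
Implicit Types u v x y z : 'rV[R]_m.

(* [dotp (2x - (u + v)) (u - v) = 0] is the equation of the perpendicular bisector of [u, v];
   for [u = v] the map is the identity since [0 / 0 = 0]. *)
Definition bisector_refl u v x : 'rV[R]_m :=
  x - (dotp (x *+ 2 - (u + v)) (u - v) / dotp (u - v) (u - v)) *: (u - v).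

Lemma dotp_bisector u v x :
  dotp (x *+ 2 - (u + v)) (u - v) = dotp x (u - v) *+ 2 - dotp u (u - v) - dotp v (u - v).
Proof. by rewrite dotpBl dotpDl dotpMn opprD addrA. Qed.

Lemma bisector_refl_id u x : bisector_refl u u x = x.
Proof. by rewrite /bisector_refl subrr scaler0 subr0. Qed.

Lemma bisector_reflK u v : involutive (bisector_refl u v).
Proof.
move=> x; have [<-|uv] := eqVneq u v; first by rewrite !bisector_refl_id.
have D0 : dotp (u - v) (u - v) != 0 by rewrite dotp_eq0 subr_eq0.
rewrite /bisector_refl; set w := u - v; set D := dotp w w.
set c := dotp (x *+ 2 - (u + v)) w / D.
have -> : dotp ((x - c *: w) *+ 2 - (u + v)) w / D = - c.
  rewrite !dotp_bisector -/w dotpBl dotpZl -/D /c dotp_bisector; field; exact: D0.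
by rewrite scaleNr opprK subrK.
Qed.

Lemma bisector_refl_iso u v x y :
  sqdist (bisector_refl u v x) (bisector_refl u v y) = sqdist x y.
Proof.
have [<-|uv] := eqVneq u v; first by rewrite !bisector_refl_id.
have D0 : dotp (u - v) (u - v) != 0 by rewrite dotp_eq0 subr_eq0.
rewrite /bisector_refl !dotp_bisector !sqdistE.
set w := u - v; set cx := (_ / _); set cy := (_ / _).
have -> : x - cx *: w - (y - cy *: w) = (x - y) - (cx - cy) *: w.
  by apply/rowP => i; rewrite !mxE; ring.
rewrite !dotpBl !dotpBr !dotpZl !dotpZr /cx /cy (dotpC w x) (dotpC w y).
by field.
Qed.

Lemma bisector_refl_map u v : bisector_refl u v u = v.
Proof.
have [<-|uv] := eqVneq u v; first exact: bisector_refl_id.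
have D0 : dotp (u - v) (u - v) != 0 by rewrite dotp_eq0 subr_eq0.
rewrite /bisector_refl (_ : u *+ 2 - (u + v) = u - v); last first.
  by rewrite mulr2n opprD addrACA subrr add0r.
by rewrite divff // scale1r subKr.
Qed.

Lemma bisector_refl_fix u v z : sqdist z u = sqdist z v -> bisector_refl u v z = z.
Proof.
rewrite /bisector_refl !sqdistE dotp_bisector !dotpBl !dotpBr.
rewrite (dotpC u z) (dotpC v z) (dotpC v u) => e.
by rewrite (_ : _ - _ - _ = 0) ?mul0r ?scale0r ?subr0 //; lra.
Qed.

End BisectorReflection.

(** * Triangles in one orbit of an isometric action *)

Section IsometricActions.
Variables (R : realType) (p alpha n : nat).
Implicit Types act : 'rV['F_p]_alpha -> 'rV[R]_n -> 'rV[R]_n.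

Lemma sqdist_act act g h x : isometric_action act ->
  sqdist (act g x) (act h x) = sqdist x (act (h - g) x).
Proof.
case=> act0 actD act_iso; rewrite -(act_iso (- g)) -!actD addNr act0.
by rewrite addrC.
Qed.

Lemma isometric_action_conj act (f : 'rV[R]_n -> 'rV[R]_n) :
  involutive f -> (forall x y, sqdist (f x) (f y) = sqdist x y) ->
  isometric_action act -> isometric_action (fun g x => f (act g (f x))).
Proof.
move=> fK f_iso [act0 actD act_iso]; split=> [x|g h x|g x y].
- by rewrite act0 fK.
- by rewrite fK actD.
- by rewrite f_iso act_iso f_iso.
Qed.

End IsometricActions.

Definition orbit_triangle (R : realType) (p alpha n : nat) (P0 P1 P2 : 'rV[R]_n) : Prop :=
  exists act : 'rV['F_p]_alpha -> 'rV[R]_n -> 'rV[R]_n, isometric_action act /\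
  exists x0 g0 g1 g2, [/\ act g0 x0 = P0, act g1 x0 = P1 & act g2 x0 = P2].

Definition realizable (R : realType) (p alpha n : nat) (x y z : R) : Prop :=
  exists P0 P1 P2 : 'rV[R]_n, orbit_triangle p alpha P0 P1 P2 /\
    [/\ sqdist P0 P1 = x, sqdist P0 P2 = y & sqdist P1 P2 = z].

Section OrbitTriangles.
Variables (R : realType) (p alpha n : nat).
Implicit Types P Q : 'rV[R]_n.

Lemma orbit_triangle_isometry P0 P1 P2 (f : 'rV[R]_n -> 'rV[R]_n) :
  involutive f -> (forall x y, sqdist (f x) (f y) = sqdist x y) ->
  orbit_triangle p alpha P0 P1 P2 -> orbit_triangle p alpha (f P0) (f P1) (f P2).
Proof.
move=> fK f_iso [act [act_iso [x0 [g0 [g1 [g2 [<- <- <-]]]]]]].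
exists (fun g x => f (act g (f x))); split.
  exact: isometric_action_conj fK f_iso act_iso.
by exists (f x0), g0, g1, g2; rewrite fK.
Qed.

Lemma orbit_triangle_bisector_refl P0 P1 P2 u v :
  orbit_triangle p alpha P0 P1 P2 ->
  orbit_triangle p alpha (bisector_refl u v P0) (bisector_refl u v P1) (bisector_refl u v P2).
Proof. by apply: orbit_triangle_isometry; [exact: bisector_reflK | exact: bisector_refl_iso]. Qed.

(* Congruent triangles are mapped onto each other by at most three reflections. *)
Lemma orbit_triangle_congr P0 P1 P2 Q0 Q1 Q2 :
  sqdist P0 P1 = sqdist Q0 Q1 -> sqdist P0 P2 = sqdist Q0 Q2 ->
  sqdist P1 P2 = sqdist Q1 Q2 ->
  orbit_triangle p alpha P0 P1 P2 -> orbit_triangle p alpha Q0 Q1 Q2.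
Proof.
move=> d01 d02 d12 /(orbit_triangle_bisector_refl P0 Q0).
rewrite bisector_refl_map; set r1 := bisector_refl P0 Q0.
move=> /(orbit_triangle_bisector_refl (r1 P1) Q1).
rewrite bisector_refl_map; set r2 := bisector_refl (r1 P1) Q1.
have r2Q0 : r2 Q0 = Q0.
  by apply: bisector_refl_fix; rewrite -{1}(bisector_refl_map P0 Q0) bisector_refl_iso.
rewrite r2Q0 => /(orbit_triangle_bisector_refl (r2 (r1 P2)) Q2).
rewrite bisector_refl_map !bisector_refl_fix //.
- by rewrite -{1}(bisector_refl_map (r1 P1) Q1) !bisector_refl_iso.
- by rewrite -{1}r2Q0 -{1}(bisector_refl_map P0 Q0) !bisector_refl_iso.
Qed.

Lemma orbit_triangle_realizable Q0 Q1 Q2 :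
  realizable p alpha n (sqdist Q0 Q1) (sqdist Q0 Q2) (sqdist Q1 Q2) ->
  orbit_triangle p alpha Q0 Q1 Q2.
Proof. by case=> P0 [P1 [P2 [orbitP [d01 d02 d12]]]]; exact: orbit_triangle_congr orbitP. Qed.

Lemma realizable_swap (x y z : R) : realizable p alpha n x y z -> realizable p alpha n y x z.
Proof.
case=> P0 [P1 [P2 [[act [act_iso [x0 [g0 [g1 [g2 [e0 e1 e2]]]]]]] [d01 d02 d12]]]].
exists P0, P2, P1; split; last by split; rewrite // sqdistC.
by exists act; split => //; exists x0, g0, g2, g1.
Qed.

Lemma realizable_rebase (x y z : R) : realizable p alpha n x y z -> realizable p alpha n x z y.
Proof.
case=> P0 [P1 [P2 [[act [act_iso [x0 [g0 [g1 [g2 [e0 e1 e2]]]]]]] [d01 d02 d12]]]].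
exists P1, P0, P2; split; last by split; rewrite // sqdistC.
by exists act; split => //; exists x0, g1, g0, g2.
Qed.

End OrbitTriangles.

Section ProductAction.
Variables (R : realType) (p a1 a2 n1 n2 : nat).
Variables (act1 : 'rV['F_p]_a1 -> 'rV[R]_n1 -> 'rV[R]_n1)
          (act2 : 'rV['F_p]_a2 -> 'rV[R]_n2 -> 'rV[R]_n2).

Definition prod_action (g : 'rV['F_p]_(a1 + a2)) (x : 'rV[R]_(n1 + n2)) :=
  row_mx (act1 (lsubmx g) (lsubmx x)) (act2 (rsubmx g) (rsubmx x)).

Lemma prod_action_row g1 g2 x1 x2 :
  prod_action (row_mx g1 g2) (row_mx x1 x2) = row_mx (act1 g1 x1) (act2 g2 x2).
Proof. by rewrite /prod_action !row_mxKl !row_mxKr. Qed.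

Lemma isometric_prod_action :
  isometric_action act1 -> isometric_action act2 -> isometric_action prod_action.
Proof.
case=> act1_0 act1_D act1_iso [act2_0 act2_D act2_iso].
split=> [x|g h x|g x y]; rewrite /prod_action.
- by rewrite !linear0 act1_0 act2_0 hsubmxK.
- by rewrite !linearD act1_D act2_D row_mxKl row_mxKr.
- by rewrite sqdist_row act1_iso act2_iso -sqdist_row !hsubmxK.
Qed.

End ProductAction.

Lemma realizable_add (R : realType) (p a1 a2 n1 n2 : nat) (x1 y1 z1 x2 y2 z2 : R) :
  realizable p a1 n1 x1 y1 z1 -> realizable p a2 n2 x2 y2 z2 ->
  realizable p (a1 + a2) (n1 + n2) (x1 + x2) (y1 + y2) (z1 + z2).
Proof.
case=> P0 [P1 [P2 [[act1 [iso1 [x0 [g0 [g1 [g2 [e0 e1 e2]]]]]]] [<- <- <-]]]].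
case=> Q0 [Q1 [Q2 [[act2 [iso2 [y0 [h0 [h1 [h2 [f0 f1 f2]]]]]]] [<- <- <-]]]].
exists (row_mx P0 Q0), (row_mx P1 Q1), (row_mx P2 Q2); split; last by rewrite !sqdist_row.
exists (prod_action act1 act2); split; first exact: isometric_prod_action.
exists (row_mx x0 y0), (row_mx g0 h0), (row_mx g1 h1), (row_mx g2 h2).
by rewrite !prod_action_row e0 e1 e2 f0 f1 f2.
Qed.

Lemma realizable0 (R : realType) (p n : nat) : realizable p 0 n (0 : R) 0 0.
Proof.
exists 0, 0, 0; split; last by rewrite sqdistxx.
by exists (fun _ x => x); split; [split | exists 0, 0, 0, 0].
Qed.

(** * Rotation actions of [F_p] *)

Section PlaneRotation.
Variable R : realType.

Lemma ord2P (i : 'I_2) : i = 0 \/ i = 1.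
Proof. by case: i => [[|[|//]]] ?; [left | right]; apply/val_inj. Qed.

Definition rot (a : R) : 'M[R]_2 :=
  \matrix_(i, j) if i == 0 then (if j == 0 then cos a else sin a)
                 else (if j == 0 then - sin a else cos a).

Lemma rotD a b : rot (a + b) = rot a *m rot b.
Proof.
apply/matrixP => i j; rewrite !mxE !big_ord_recr big_ord0 !mxE /= sinD cosD.
by case: (ord2P i) => ->; case: (ord2P j) => -> /=; ring.
Qed.

Lemma rot0 : rot 0 = 1%:M.
Proof.
apply/matrixP => i j; rewrite !mxE sin0 cos0.
by case: (ord2P i) => ->; case: (ord2P j) => -> /=; rewrite ?oppr0.
Qed.

Lemma rot_orthogonal a : rot a *m (rot a)^T = 1%:M.
Proof.
apply/matrixP => i j; rewrite !mxE !big_ord_recr big_ord0 !mxE /=.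
have := cos2Dsin2 a.
by case: (ord2P i) => ->; case: (ord2P j) => -> /=; lra.
Qed.

Lemma rotD2pi a n : rot (a + pi *+ 2 *+ n) = rot a.
Proof.
by apply/matrixP => i j; rewrite !mxE (periodicn (@sinD2pi R)) (periodicn (@cosD2pi R)).
Qed.

Lemma sqdist_mul_rot (x y : 'rV[R]_2) a : sqdist (x *m rot a) (y *m rot a) = sqdist x y.
Proof.
rewrite !sqdistE /dotp -mulmxBl trmx_mul !mulmxA -(mulmxA _ (rot a)) rot_orthogonal.
by rewrite mulmx1.
Qed.

Lemma sqdist_rot r u :
  sqdist (r *: delta_mx 0 0) (r *: delta_mx 0 0 *m rot (u *+ 2)) = r ^+ 2 * (4 * sin u ^+ 2).
Proof.
rewrite /sqdist !big_ord_recr !big_ord0 /= !mxE !big_ord_recr !big_ord0 !mxE /=.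
rewrite sin_mulr2n cos_mulr2n; have := cos2Dsin2 u.
nra.
Qed.

End PlaneRotation.

Section SquaredSideLengths.
Variable R : realFieldType.
Implicit Types x y z c : R.

Definition triangle_ineq x y z := [/\ x <= y + z, y <= x + z & z <= x + y].

(* sixteen times the squared area of a triangle with squared side lengths [x], [y], [z] *)
Definition heron x y z := 2 * (x * y + y * z + z * x) - (x ^+ 2 + y ^+ 2 + z ^+ 2).

Lemma heronE x y z : heron x y z = 4 * x * y - (z - x - y) ^+ 2.
Proof. by rewrite /heron; ring. Qed.

Lemma heronC x y z : heron y x z = heron x y z.
Proof. by rewrite /heron; ring. Qed.

Lemma heron_rot x y z : heron x z y = heron x y z.
Proof. by rewrite /heron; ring. Qed.

Lemma triangle_ineq_cone c x y z : 0 < c -> triangle_ineq x y z ->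
  exists m1 m2 m3, [/\ 0 <= m1, 0 <= m2, 0 <= m3 &
    [/\ x = (m1 + m2) * c, y = (m1 + m3) * c & z = (m2 + m3) * c]].
Proof.
move=> c_gt0 [xyz yxz zxy]; have c2_gt0 : 0 < c * 2 by rewrite mulr_gt0.
exists ((x + y - z) / (c * 2)), ((x + z - y) / (c * 2)), ((y + z - x) / (c * 2)).
split; rewrite ?divr_ge0 ?subr_ge0 ?(ltW c2_gt0) //.
by split; field; rewrite gt_eqF.
Qed.

End SquaredSideLengths.

Section FpRotation.
Variables (R : realType) (p : nat).
Hypothesis p_pr : prime p.

(* squared length of the chord of the unit circle joining two [p]-th roots of unity
   that are [n] steps apart *)
Definition sqchord (n : nat) : R := 4 * sin (n%:R * pi / p%:R) ^+ 2.

Let p_gt0 : (0 < p)%N. Proof. exact: prime_gt0. Qed.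
Let pR_neq0 : (p%:R : R) != 0. Proof. by rewrite pnatr_eq0 -lt0n. Qed.

Lemma sqchord0 : sqchord 0 = 0.
Proof. by rewrite /sqchord !mul0r sin0 expr0n mulr0. Qed.

Lemma sqchord1_gt0 : 0 < sqchord 1.
Proof.
have pR_gt1 : (1 : R) < p%:R by rewrite ltr1n prime_gt1.
rewrite /sqchord mul1r mulr_gt0 // exprn_gt0 // sin_gt0_pi //.
by rewrite divr_gt0 ?pi_gt0 ?ltr0n //= ltr_pdivrMr ?ltr0n // ltr_pMr ?pi_gt0.
Qed.

Lemma sqchord_modn n : sqchord (n %% p) = sqchord n.
Proof.
rewrite /sqchord; have -> : n%:R * pi / p%:R = (n %% p)%:R * pi / p%:R + pi *+ (n %/ p) :> R.
  by rewrite {1}(divn_eq n p) natrD natrM -mulr_natr; field.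
by rewrite (alternatingn (@sinDpi R)) exprMn sqrr_sign mul1r.
Qed.

Lemma sqchord_subn n : (n <= p)%N -> sqchord (p - n) = sqchord n.
Proof.
move=> le_np; rewrite /sqchord; have -> : (p - n)%:R * pi / p%:R = pi - n%:R * pi / p%:R :> R.
  by rewrite natrB //; field.
by rewrite sinB sinpi cospi mul0r sub0r mulN1r opprK.
Qed.

Lemma val_FpD (v w : 'F_p) : nat_of_ord (v + w) = ((v + w) %% p)%N.
Proof. by case: v => m /= _; case: w => n /= _; rewrite Fp_cast. Qed.

Lemma val_FpN (v : 'F_p) : nat_of_ord (- v) = ((p - v) %% p)%N.
Proof. by case: v => n /= _; rewrite Fp_cast. Qed.

Lemma val_Fp_le (v : 'F_p) : (v <= p)%N.
Proof. by case: v => n /=; rewrite Fp_cast // => /ltnW. Qed.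

Lemma sqchord_Fp_nat n : sqchord (n%:R : 'F_p) = sqchord n.
Proof. by rewrite val_Fp_nat // sqchord_modn. Qed.

Lemma sqchord_FpN (v : 'F_p) : sqchord (- v)%R = sqchord v.
Proof. by rewrite val_FpN sqchord_modn sqchord_subn // val_Fp_le. Qed.

Definition Fp_rot (g : 'rV['F_p]_1) (x : 'rV[R]_2) : 'rV[R]_2 :=
  x *m rot ((g 0 0 : nat)%:R * pi / p%:R *+ 2).

Lemma isometric_Fp_rot : isometric_action Fp_rot.
Proof.
rewrite /Fp_rot; split=> [x|g h x|g x y].
- by rewrite mxE mul0r mul0r mul0rn rot0 mulmx1.
- rewrite -mulmxA -rotD mxE val_FpD; set k := (_ + _)%N.
  rewrite -(rotD2pi _ (k %/ p)); congr (_ *m rot _).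
  rewrite [in RHS]addrC -mulrnDl -!mulrDl -natrD -/k [in RHS](divn_eq k p).
  by rewrite natrD natrM !mulr2n -[(pi + pi) *+ _]mulr_natr; field.
- exact: sqdist_mul_rot.
Qed.

Lemma realizable_Fp_rot (r : R) (a b : 'F_p) :
  realizable p 1 2 (r ^+ 2 * sqchord a) (r ^+ 2 * sqchord b) (r ^+ 2 * sqchord (b - a)%R).
Proof.
have [Fp_rot0 _ _] := isometric_Fp_rot; set P0 : 'rV[R]_2 := r *: delta_mx 0 0.
exists P0, (Fp_rot (const_mx a) P0), (Fp_rot (const_mx b) P0); split.
  exists Fp_rot; split; first exact: isometric_Fp_rot.
  by exists P0, 0, (const_mx a), (const_mx b); split; rewrite ?Fp_rot0.
split; last rewrite (sqdist_act _ _ _ isometric_Fp_rot).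
all: by rewrite /Fp_rot /P0 /sqchord !mxE sqdist_rot.
Qed.

(* Four rotation planes, and a copy of [R^k] fixed by the action to make room for the
   triangle itself. *)
Lemma realizable_cone k (l m1 m2 m3 : R) (s t : nat) :
  0 <= l -> 0 <= m1 -> 0 <= m2 -> 0 <= m3 ->
  realizable p 4 (8 + k) (l * sqchord s + (m1 + m2) * sqchord 1)
    (l * sqchord t + (m1 + m3) * sqchord 1) (l * sqchord (s + t) + (m2 + m3) * sqchord 1).
Proof.
move=> l0 m1_0 m2_0 m3_0.
have := realizable_Fp_rot (Num.sqrt l) s%:R (- t%:R).
rewrite -opprD -natrD !sqchord_FpN !sqchord_Fp_nat addnC sqr_sqrtr // => obtuse.
have := realizable_Fp_rot (Num.sqrt m1) 1%:R 1%:R.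
rewrite subrr sqchord_Fp_nat sqr_sqrtr // => flat12.
have := realizable_Fp_rot (Num.sqrt m2) 1%:R 0.
rewrite sub0r sqchord_FpN sqchord_Fp_nat sqr_sqrtr // => flat13.
have := realizable_Fp_rot (Num.sqrt m3) 0 1%:R.
rewrite subr0 sqchord_Fp_nat sqr_sqrtr // => flat23.
have := realizable_add obtuse (realizable_add flat12 (realizable_add flat13
  (realizable_add flat23 (realizable0 R p k)))).
rewrite /= sqchord0 !mulr0 !addr0 !add0r.
by rewrite !mulrDl !addrA.
Qed.

Lemma realizable_triangle k (l x y z : R) (s t : nat) : 0 <= l -> triangle_ineq x y z ->
  realizable p 4 (8 + k) (l * sqchord s + x) (l * sqchord t + y) (l * sqchord (s + t) + z).
Proof.
move=> l0 /(triangle_ineq_cone sqchord1_gt0) [m1 [m2 [m3 [m1_0 m2_0 m3_0 [-> -> ->]]]]].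
exact: realizable_cone.
Qed.

End FpRotation.

(** * Trigonometric estimates *)

Section SineEstimates.
Variable R : realType.
Implicit Types (th c w u v : R) (n : nat).

Lemma sin_mulrn_le th n : 0 <= th -> n%:R * th <= pi -> sin (n%:R * th) <= n%:R * sin th.
Proof.
move=> th0; elim: n => [|n IHn] hn; first by rewrite !mul0r sin0.
have pi0 := @pi_gt0 R.
have hn' : n%:R * th <= pi by apply: le_trans hn; rewrite ler_wpM2r // ler_nat.
have thpi : th <= pi by apply: le_trans hn; rewrite ler_peMl // ler1n.
have s0 : 0 <= sin th by rewrite sin_ge0_pi // th0.
have sn0 : 0 <= sin (n%:R * th) by rewrite sin_ge0_pi // hn' mulr_ge0.
have := IHn hn'; rewrite -addn1 natrD !mulrDl !mul1r sinD.
by have := cos_le1 th; have := cos_le1 (n%:R * th); nra.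
Qed.

Lemma sin_mulrn_ge th n :
  0 <= th -> n%:R * th <= pi / 2 -> n%:R * sin th * cos (n%:R * th) <= sin (n%:R * th).
Proof.
move=> th0; elim: n => [|n IHn] hn; first by rewrite !mul0r sin0.
have pi0 := @pi_gt0 R.
have hn' : n%:R * th <= pi / 2 by apply: le_trans hn; rewrite ler_wpM2r // ler_nat.
have th2 : th <= pi / 2 by apply: le_trans hn; rewrite ler_peMl // ler1n.
have s0 : 0 <= sin th by rewrite sin_ge0_pi // th0 /=; lra.
have c0 : 0 <= cos th by rewrite cos_ge0_pihalf // th2 andbT; lra.
have nth0 : 0 <= n%:R * th by rewrite mulr_ge0.
have cn0 : 0 <= cos (n%:R * th) by rewrite cos_ge0_pihalf // hn' andbT; lra.
have IH := IHn hn'; have cle1 := cos_le1 th.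
rewrite -addn1 natrD !mulrDl !mul1r sinD cosD.
have P : 0 <= cos th + (n%:R + 1) * sin th ^+ 2.
  by rewrite addr_ge0 // mulr_ge0 ?addr_ge0 ?sqr_ge0.
have Q : 0 <= 1 - cos th + n%:R * (n%:R + 1) * sin th ^+ 2.
  by rewrite addr_ge0 ?subr_ge0 // !mulr_ge0 ?addr_ge0 ?sqr_ge0.
have := ler_wpM2r P IH.
have : 0 <= sin th * cos (n%:R * th) * (1 - cos th + n%:R * (n%:R + 1) * sin th ^+ 2).
  by rewrite !mulr_ge0.
nra.
Qed.

Lemma cos_ge_acos c w : -1 <= c <= 1 -> 0 <= w <= acos c -> c <= cos w.
Proof.
move=> c1 /andP[w0 wc]; have ac0 := acos_ge0 c1; have acpi := acos_lepi c1.
have cI : c \in `[-1, 1] by rewrite in_itv.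
have wI : w \in `[0, pi] by rewrite in_itv /= w0 (le_trans wc acpi).
have aI : acos c \in `[0, pi] by rewrite in_itv /= ac0 acpi.
by rewrite -{1}(acosK cI) leNgt ltr_cos // -leNgt.
Qed.

Lemma acos_le_pihalf c : 0 <= c <= 1 -> acos c <= pi / 2.
Proof.
move=> /andP[c0 c1]; have c11 : -1 <= c <= 1 by rewrite c1 andbT; lra.
have cI : c \in `[-1, 1] by rewrite in_itv.
have aI : acos c \in `[0, pi] by rewrite in_itv /= acos_ge0 // acos_lepi.
have hI : (pi / 2 : R) \in `[0, pi] by rewrite in_itv /=; have := @pi_gt0 R; lra.
by rewrite leNgt -ltr_cos // acosK // cos_pihalf -leNgt.
Qed.

Lemma sin_sqrD u v :
  sin (u + v) ^+ 2 - sin u ^+ 2 - sin v ^+ 2 = 2 * sin u * sin v * cos (u + v).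
Proof. by rewrite sinD cosD sqrrD !exprMn !cos2sin2; ring. Qed.

End SineEstimates.

Definition sqchord_excess (R : realType) (q s t : nat) : R :=
  sqchord R q (s + t) - sqchord R q s - sqchord R q t.

Lemma sqchord_excessC (R : realType) (q s t : nat) :
  sqchord_excess R q t s = sqchord_excess R q s t.
Proof. by rewrite /sqchord_excess addnC; ring. Qed.

Section ObtuseExcess.
Variables (R : realType) (q s t : nat) (c : R).
Hypotheses (q_gt0 : (0 < q)%N) (s_gt0 : (0 < s)%N) (t_gt0 : (0 < t)%N).
Hypotheses (c_gt0 : 0 < c) (c_le1 : c <= 1) (st_le : (s + t)%:R * pi / q%:R <= acos c).

Let th : R := pi / q%:R.

Let angleE n : n%:R * pi / q%:R = n%:R * th.
Proof. by rewrite mulrA. Qed.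

Let th_gt0 : 0 < th.
Proof. by rewrite divr_gt0 ?pi_gt0 ?ltr0n. Qed.

Let angle_le n : (n <= s + t)%N -> 0 <= n%:R * th <= acos c.
Proof.
move=> le_n; rewrite mulr_ge0 ?(ltW th_gt0) //= (le_trans _ st_le) // angleE.
by rewrite ler_wpM2r ?(ltW th_gt0) // ler_nat.
Qed.

Let angle_le_pihalf n : (n <= s + t)%N -> n%:R * th <= pi / 2.
Proof.
move=> /angle_le /andP[_ le_n]; apply: le_trans le_n (acos_le_pihalf _).
by rewrite (ltW c_gt0).
Qed.

Let cos_ge n : (n <= s + t)%N -> c <= cos (n%:R * th).
Proof.
move=> le_n; apply: cos_ge_acos (angle_le le_n); rewrite c_le1 andbT.
by have := c_gt0; lra.
Qed.

Let sin_gt0 n : (0 < n <= s + t)%N -> 0 < sin (n%:R * th).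
Proof.
case/andP=> n_gt0 le_n; rewrite sin_gt0_pi // mulr_gt0 ?ltr0n //=.
by have := angle_le_pihalf le_n; have := @pi_gt0 R; lra.
Qed.

Lemma sqchord_excessE :
  sqchord_excess R q s t = 8 * sin (s%:R * th) * sin (t%:R * th) * cos ((s + t)%:R * th).
Proof.
rewrite /sqchord_excess /sqchord !angleE natrD (mulrDl s%:R t%:R th).
by have := sin_sqrD (s%:R * th) (t%:R * th); lra.
Qed.

Lemma sqchord_excess_gt0 : 0 < sqchord_excess R q s t.
Proof.
rewrite sqchord_excessE !mulr_gt0 ?sin_gt0 ?s_gt0 ?t_gt0 ?leq_addr ?leq_addl //.
exact: lt_le_trans c_gt0 (cos_ge _).
Qed.

Lemma sin_ratio_le :
  t%:R * c ^+ 2 * sin (s%:R * th) <= s%:R * sin (t%:R * th) * cos ((s + t)%:R * th).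
Proof.
have le_s : (s <= s + t)%N := leq_addr t s.
have le_t : (t <= s + t)%N := leq_addl s t.
have th0 := ltW th_gt0; have c0 := ltW c_gt0.
have pihalf_le : pi / 2 <= (pi : R) by have := @pi_gt0 R; lra.
have S_le := sin_mulrn_le th0 (le_trans (angle_le_pihalf le_s) pihalf_le).
have T_ge := sin_mulrn_ge th0 (angle_le_pihalf le_t).
have th_le : th <= pi / 2.
  by have := angle_le_pihalf (n := 1); rewrite mulr1n mul1r addn_gt0 s_gt0; apply.
have sin0 : 0 <= sin th by rewrite sin_ge0_pi // th0 (le_trans th_le).
have Ct_ge := cos_ge le_t; have C_ge := cos_ge (leqnn (s + t)).
set S := sin (s%:R * th) in S_le *; set T := sin (t%:R * th) in T_ge *.
set Ct := cos (t%:R * th) in T_ge Ct_ge *; set C := cos ((s + t)%:R * th) in C_ge *.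
have e1 : t%:R * c ^+ 2 * S <= t%:R * c ^+ 2 * (s%:R * sin th).
  by rewrite ler_wpM2l // mulr_ge0 ?sqr_ge0.
have e2 : c ^+ 2 <= Ct * C by rewrite expr2 ler_pM.
have e3 : s%:R * t%:R * sin th * c ^+ 2 <= s%:R * t%:R * sin th * (Ct * C).
  by rewrite ler_wpM2l // !mulr_ge0.
have e4 : s%:R * (t%:R * sin th * Ct) * C <= s%:R * T * C.
  by rewrite ler_wpM2r ?ler_wpM2l // (le_trans c0).
lra.
Qed.

Lemma sqchord_excess_ge (x d : R) : 0 <= d ->
  d * s%:R <= 2 * x * c ^+ 2 * t%:R -> d * sqchord R q s <= sqchord_excess R q s t * x.
Proof.
move=> d0 le_ds; have ratio := sin_ratio_le.
rewrite sqchord_excessE /sqchord angleE.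
have th0 := ltW th_gt0; have c0 := ltW c_gt0.
have S0 : 0 <= sin (s%:R * th) by apply/ltW/sin_gt0; rewrite s_gt0 leq_addr.
have T0 : 0 <= sin (t%:R * th) by apply/ltW/sin_gt0; rewrite t_gt0 leq_addl.
have C0 : 0 <= cos ((s + t)%:R * th) by exact: le_trans c0 (cos_ge (leqnn _)).
set S := sin (s%:R * th) in ratio S0 *; set T := sin (t%:R * th) in ratio T0 *.
set C := cos ((s + t)%:R * th) in ratio C0 *.
have TC0 : 0 <= T * C by rewrite mulr_ge0.
have h1 : d * (t%:R * c ^+ 2 * S) <= d * (s%:R * T * C) by rewrite ler_wpM2l.
have h2 : d * s%:R * (T * C) <= 2 * x * c ^+ 2 * t%:R * (T * C) by rewrite ler_wpM2r.
have tc_gt0 : 0 < t%:R * c ^+ 2 by rewrite mulr_gt0 ?ltr0n ?exprn_gt0.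
have h3 : d * S <= 2 * x * T * C.
  rewrite -(ler_pM2l tc_gt0); lra.
have := ler_wpM2l (mulr_ge0 (ler0n R 4) S0) h3; lra.
Qed.

End ObtuseExcess.

(** * Eventual realizability *)

Section Approximation.
Variable R : realType.

Lemma truncnS_gt (x : R) : 0 <= x -> x < (Num.truncn x).+1%:R.
Proof. by move=> /truncn_itv /andP[]. Qed.

Lemma exists_ratio (d A B : R) : 0 < d -> 0 < A -> 0 < B -> d ^+ 2 < A * B ->
  exists s t : nat, [/\ (0 < s)%N, (0 < t)%N, d * t%:R <= B * s%:R & d * s%:R <= A * t%:R].
Proof.
move=> d0 A0 B0 dAB; set a := d / B; set b := A / d.
have ab : a < b by rewrite /a /b ltr_pdivrMr // mulrAC ltr_pdivlMr // -expr2 mulrC.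
set t := (Num.truncn (b - a)^-1).+1.
have tab : 1 < t%:R * (b - a).
  by rewrite -ltr_pdivrMr ?subr_gt0 // div1r truncnS_gt // invr_ge0 subr_ge0 ltW.
have ta0 : 0 <= t%:R * a by rewrite mulr_ge0 // divr_ge0 // ltW.
set s := (Num.truncn (t%:R * a)).+1.
have [s_ge s_lt] : t%:R * a <= s%:R /\ s%:R <= t%:R * a + 1.
  have /andP[trunc_le trunc_gt] := truncn_itv ta0.
  by split; [exact: ltW | rewrite /s -addn1 natrD lerD2r].
exists s, t; split => //.
- have -> : d * t%:R = B * (t%:R * a) by rewrite /a; field; rewrite gt_eqF.
  by rewrite ler_wpM2l // ltW.
- have sb : s%:R <= t%:R * b by lra.
  have -> : A * t%:R = d * (t%:R * b) by rewrite /b; field; rewrite gt_eqF.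
  by rewrite ler_wpM2l // ltW.
Qed.

Lemma exists_nat_div_le (a w : R) : 0 < w ->
  exists N : nat, forall q : nat, (N <= q)%N -> a / q%:R <= w.
Proof.
move=> w0; exists (Num.truncn `|a / w|).+1 => q le_Nq.
have q0 : (0 : R) < q%:R by rewrite ltr0n (leq_trans _ le_Nq).
rewrite ler_pdivrMr // mulrC -ler_pdivrMr //.
apply: le_trans (ler_norm _) (ltW (lt_le_trans (truncnS_gt (normr_ge0 _)) _)).
by rewrite ler_nat.
Qed.

Lemma exists_fourth_power_between (r : R) :
  0 <= r < 1 -> exists c : R, [/\ 0 < c, c < 1 & r < c ^+ 4].
Proof.
case/andP=> r0 r1; set e := (1 + r) / 2.
have e0 : 0 <= e by rewrite /e; lra.
exists (Num.sqrt e); split.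
- by rewrite sqrtr_gt0 /e; lra.
- by rewrite -sqrtr1 ltr_sqrt // /e; lra.
rewrite (_ : 4 = 2 * 2)%N // exprM sqr_sqrtr //.
have : 0 < (1 - r) ^+ 2 by rewrite exprn_gt0 // subr_gt0.
by rewrite /e; lra.
Qed.

End Approximation.

Lemma eventually_sqchord_obtuse (R : realType) (x y d : R) :
  0 < x -> 0 < y -> 0 < d -> d ^+ 2 < 4 * x * y ->
  exists s t N : nat, forall q : nat, (N <= q)%N ->
    [/\ 0 < sqchord_excess R q s t, d * sqchord R q s <= sqchord_excess R q s t * x
      & d * sqchord R q t <= sqchord_excess R q s t * y].
Proof.
move=> x0 y0 d0 dxy; have xy0 : 0 < 4 * x * y by rewrite !mulr_gt0.
have [|c [c0 c1 r_lt]] := @exists_fourth_power_between R (d ^+ 2 / (4 * x * y)).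
  by rewrite divr_ge0 ?sqr_ge0 ?(ltW xy0) //= ltr_pdivrMr // mul1r.
have [||||s [t [s0 t0 dt ds]]] := @exists_ratio R d (2 * x * c ^+ 2) (2 * y * c ^+ 2) => //.
- by rewrite !mulr_gt0 ?exprn_gt0.
- by rewrite !mulr_gt0 ?exprn_gt0.
- move: r_lt; rewrite ltr_pdivrMr //; lra.
have [|N st_le] := @exists_nat_div_le R ((s + t)%:R * pi) (acos c).
  by rewrite acos_gt0 // c1 andbT; lra.
exists s, t, N.+1 => q Nq; have q0 : (0 < q)%N by apply: leq_trans Nq.
have c_le1 := ltW c1; have {}st_le := st_le q (ltnW Nq).
split; first exact: sqchord_excess_gt0 q0 s0 t0 c0 c_le1 st_le.
- exact: sqchord_excess_ge q0 s0 t0 c0 c_le1 st_le _ _ (ltW d0) ds.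
- rewrite addnC in st_le; rewrite -sqchord_excessC.
  exact: sqchord_excess_ge q0 t0 s0 c0 c_le1 st_le _ _ (ltW d0) dt.
Qed.

Section EventuallyRealizable.
Variables (R : realType) (k : nat).

Lemma eventually_realizable_obtuse (x y z : R) :
  0 <= x -> 0 <= y -> x + y < z -> 0 < heron x y z ->
  exists p0 : nat, forall p, prime p -> (p0 <= p)%N -> realizable p 4 (8 + k) x y z.
Proof.
move=> x0 y0 xyz; rewrite heronE => hxy.
set d := z - x - y in hxy; have d0 : 0 < d by rewrite /d; lra.
have x_gt0 : 0 < x by nra.
have y_gt0 : 0 < y by nra.
have [|s [t [N HN]]] := eventually_sqchord_obtuse x_gt0 y_gt0 d0; first by lra.
exists N => p p_pr Np; have [D0 ds dt] := HN p Np.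
set D := sqchord_excess R p s t in D0 ds dt; set l := d / D.
set x' := x - l * sqchord R p s; set y' := y - l * sqchord R p t.
have x'0 : 0 <= x' by rewrite subr_ge0 /l mulrAC ler_pdivrMr // [x * _]mulrC.
have y'0 : 0 <= y' by rewrite subr_ge0 /l mulrAC ler_pdivrMr // [y * _]mulrC.
have -> : x = l * sqchord R p s + x' by rewrite /x'; ring.
have -> : y = l * sqchord R p t + y' by rewrite /y'; ring.
have -> : z = l * sqchord R p (s + t) + (x' + y').
  rewrite /x' /y' /l /d; move: D0; rewrite /D /sqchord_excess => D0.
  by field; rewrite gt_eqF.
apply: realizable_triangle => //; first by rewrite /l divr_ge0 ?ltW.
by split; lra.
Qed.

Lemma eventually_realizable (x y z : R) :
  0 <= x -> 0 <= y -> 0 <= z -> 0 < heron x y z ->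
  exists p0 : nat, forall p, prime p -> (p0 <= p)%N -> realizable p 4 (8 + k) x y z.
Proof.
move=> x0 y0 z0 hxyz.
have [obt|zxy] := ltrP (x + y) z; first exact: eventually_realizable_obtuse.
have [obt|yxz] := ltrP (x + z) y.
  have [|p0 Hp0] := eventually_realizable_obtuse x0 z0 obt; first by rewrite heron_rot.
  by exists p0 => p p_pr le_p; apply/realizable_rebase/Hp0.
have [obt|xyz] := ltrP (y + z) x.
  have [|p0 Hp0] := eventually_realizable_obtuse y0 z0 obt.
    by rewrite heron_rot heronC.
  by exists p0 => p p_pr le_p; apply/realizable_swap/realizable_rebase/Hp0.
exists 0%N => p p_pr _; have := @realizable_triangle R p p_pr k 0 x y z 0 0 (lexx 0).
by rewrite !mul0r !add0r; apply.
Qed.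

End EventuallyRealizable.

(** * Non-collinear triangles *)

Section NonCollinear.
Variables (R : realType) (k : nat).
Implicit Types a b c u v : 'rV[R]_k.

Lemma rank_col_mx_scale (x y : R) (w : 'rV[R]_k) :
  (\rank (col_mx (x *: w) (y *: w)) <= 1)%N.
Proof.
rewrite -[x *: w]mul_scalar_mx -[y *: w]mul_scalar_mx -mul_col_mx.
exact: leq_trans (mxrankM_maxr _ _) (rank_leq_row _).
Qed.

Lemma rank2_dotp_lt u v :
  \rank (col_mx u v) = 2%N -> dotp u v ^+ 2 < dotp u u * dotp v v.
Proof.
move=> rk2; rewrite ltNge; apply/negP => le_uv.
suff : (\rank (col_mx u v) <= 1)%N by rewrite rk2.
have [->|u0] := eqVneq u 0.
  by rewrite (_ : col_mx 0 v = col_mx (0 *: v) (1 *: v)) ?rank_col_mx_scale ?scale0r ?scale1r.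
set X := dotp u u; set B := dotp u v.
have X0 : 0 < X by rewrite lt_def dotp_eq0 u0 dotp_ge0.
set w := X *: v - B *: u.
have ww : dotp w w = X * (X * dotp v v - B ^+ 2).
  by rewrite /w !dotpBl !dotpBr !dotpZl !dotpZr (dotpC v u) -/X -/B; ring.
have : dotp w w == 0.
  by rewrite eq_le dotp_ge0 andbT ww pmulr_rle0 // subr_le0.
rewrite dotp_eq0 subr_eq0 => /eqP Xv.
have -> : v = (B / X) *: u.
  by rewrite mulrC -scalerA -Xv scalerA mulVf ?scale1r // gt_eqF.
by rewrite -{1}[u]scale1r rank_col_mx_scale.
Qed.

Lemma heron_sqdist a b c : heron (sqdist a b) (sqdist a c) (sqdist b c) =
  4 * (dotp (b - a) (b - a) * dotp (c - a) (c - a) - dotp (b - a) (c - a) ^+ 2).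
Proof.
rewrite heronE (sqdistC a b) (sqdistC a c) !sqdistE.
have -> : b - c = (b - a) - (c - a) by rewrite opprB addrA subrK.
move: (b - a) (c - a) => u v.
by rewrite !dotpBl !dotpBr (dotpC v u); ring.
Qed.

Lemma non_collinear_heron_gt0 a b c :
  non_collinear a b c -> 0 < heron (sqdist a b) (sqdist a c) (sqdist b c).
Proof. by move=> /rank2_dotp_lt; rewrite heron_sqdist -subr_gt0 => ?; rewrite mulr_gt0. Qed.

Lemma sqdist_std_incl n (x y : 'rV[R]_k) :
  (k <= n)%N -> sqdist (std_incl n x) (std_incl n y) = sqdist x y.
Proof.
move=> le_kn; pose G (i : nat) : R :=
  if @insub nat (fun j => j < k)%N _ i is Some j then (x 0 j - y 0 j) ^+ 2 else 0.
have -> : sqdist x y = \sum_(i < k) G i by apply: eq_bigr => i _; rewrite /G valK.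
have -> : sqdist (std_incl n x) (std_incl n y) = \sum_(i < n) G i.
  apply: eq_bigr => i _; rewrite /G !mxE.
  by case: insubP => [j _ _ //|_]; rewrite subrr expr0n.
rewrite (big_ord_widen _ _ le_kn) [RHS]big_mkcond /=.
by apply: eq_bigr => i _; case: ifP => // /negbT ik; rewrite /G insubN.
Qed.

End NonCollinear.

Theorem theorem4 (R : realType) (k : nat) (a b c : 'rV[R]_k) :
  non_collinear a b c ->
  exists p0 : nat, forall p : nat, prime p -> (p0 <= p)%N ->
    euclidean_sub_p_toral p (fun x => x = a \/ x = b \/ x = c).
Proof.
move=> /non_collinear_heron_gt0 heron_gt0.
have [p0 realizable_p] := eventually_realizable k (sqdist_ge0 a b) (sqdist_ge0 a c)
  (sqdist_ge0 b c) heron_gt0.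
exists p0 => p p_pr le_p; have le_k : (k <= 8 + k)%N by rewrite leq_addl.
have := realizable_p p p_pr le_p; rewrite -!(sqdist_std_incl _ _ le_k).
case/orbit_triangle_realizable => act [act_iso [x0 [g0 [g1 [g2 [e0 e1 e2]]]]]].
exists (8 + k)%N; split => //; exists 4%N; split => //; exists act; split => //.
by exists x0 => x [->|[->|->]]; [exists g0 | exists g1 | exists g2].
Qed.
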